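(* In any finite ELP and for any policy $\pi$, let $Q_{\max}$ be any optimal solution of the problem: maximize $\mathbb E_\pi[Q(S_T,A_T)]$ over $Q\in\mathcal Q$ subject to $Q(s,a)\le\mathcal BQ(s,a)$ for all $(s,a)$ (a maximin Q-function of $\mathcal L_\pi$). Then $Q_{\max}$ is an optimal Q-function: every $Q_{\max}$-greedy policy $\mu$ satisfies $J(\mu)=\max_{\pi'}J(\pi')$.
   Context: A finite ELP is $(\mathcal S,\mathcal A,P,R,\rho)$ with finite $\mathcal S,\mathcal A$, reward $R:\mathcal S\to\mathbb R$, transitions $P(s'|s,a)$, distribution $\rho$, and nonempty terminal set $\mathcal S_\bot$. Under a policy $\pi$, $S_0$ is a fixed terminal state, $A_t\sim\pi(\cdot|S_t)$, $S_{t+1}\sim P(\cdot|S_t,A_t)$, and $T=\inf\{t\ge1:S_t\in\mathcal S_\bot\}$. ELP conditions: $\mathbb E_\pi[T]<\infty$ for every $\pi$; $P(s'|s,a)=\rho(s')$ for all $s\in\mathcal S_\bot$, all $a,s'$; every state is reachable under some policy. $J(\pi)=\mathbb E_\pi[\sum_{t=1}^TR(S_t)]$. $\mathcal Q$ = all functions $\mathcal S\times\mathcal A\to\mathbb R$. $\mathcal BQ(s,a)=\sum_{s'}P(s'|s,a)\big(R(s')+\mathbf 1[s'\notin\mathcal S_\bot]\max_{a'}Q(s',a')\big)$. A $Q$-greedy policy is a policy with $\mu(a|s)>0$ only if $Q(s,a)=\max_{\bar a}Q(s,\bar a)$. *)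

From HB Require Import structures.
From mathcomp Require Import all_boot all_order all_algebra.
From mathcomp Require Import all_classical all_reals all_analysis.
Set Implicit Arguments. Unset Strict Implicit. Unset Printing Implicit Defensive.
Import Order.TTheory GRing.Theory Num.Theory.
Import numFieldNormedType.Exports.
Local Open Scope ring_scope.

Section ELP.
Context {R : realType} {S A : finType}.

(* A (stochastic, stationary) policy: pi s a = pi(a|s). *)
Definition is_policy (pi : S -> A -> R) : Prop :=
  (forall s a, 0 <= pi s a) /\ (forall s, \sum_(a : A) pi s a = 1).

(* Marginal law of S_t of the (non-stopped) process started at S_0 = s0. *)
Fixpoint state_dist (P : S -> A -> S -> R) (s0 : S) (pi : S -> A -> R)
    (t : nat) : S -> R :=
  match t with
  | 0 => fun s => (s == s0)%:R
  | t'.+1 => fun s' => \sum_(s : S) state_dist P s0 pi t' s *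
                        \sum_(a : A) pi s a * P s a s'
  end.

(* alive P Sbot s0 pi n s = Pr_pi(S_{n+1} = s, T >= n+1),
   where T = inf {t >= 1 : S_t \in Sbot}. *)
Fixpoint alive (P : S -> A -> S -> R) (Sbot : {set S}) (s0 : S)
    (pi : S -> A -> R) (n : nat) : S -> R :=
  match n with
  | 0 => fun s' => \sum_(a : A) pi s0 a * P s0 a s'
  | n'.+1 => fun s' => \sum_(s : S | s \notin Sbot) alive P Sbot s0 pi n' s *
                        \sum_(a : A) pi s a * P s a s'
  end.

(* E_pi[T] = sum_{t>=1} Pr(T >= t); its partial sums. *)
Definition ET_series P Sbot s0 pi : R ^nat :=
  series (fun n => \sum_(s : S) alive P Sbot s0 pi n s).

(* J(pi) = E_pi[ sum_{t=1}^T R(S_t) ] = sum_{t>=1} E[R(S_t) 1{T >= t}]. *)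
Definition J P (Rw : S -> R) Sbot s0 pi : R :=
  limn (series (fun n => \sum_(s : S) alive P Sbot s0 pi n s * Rw s)).

(* L_pi(Q) = E_pi[Q(S_T, A_T)] = sum_{t>=1} sum_{s in Sbot, a} Pr(S_t=s, T=t) pi(a|s) Q(s,a). *)
Definition Lobj P (Sbot : {set S}) s0 pi (Q : S -> A -> R) : R :=
  limn (series (fun n => \sum_(s in Sbot) alive P Sbot s0 pi n s *
                          \sum_(a : A) pi s a * Q s a)).

(* max_{a} Q(s,a) (A is nonempty in any ELP; the default 0 is never used there). *)
Definition maxQ (Q : S -> A -> R) (s : S) : R :=
  if [pick a : A] is Some a0 then \big[Num.max/Q s a0]_(a : A) Q s a else 0.

Definition bellman P (Rw : S -> R) (Sbot : {set S}) (Q : S -> A -> R) (s : S) (a : A) : R :=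
  \sum_(s' : S) P s a s' * (Rw s' + (s' \notin Sbot)%:R * maxQ Q s').

Definition is_greedy (Q : S -> A -> R) (mu : S -> A -> R) : Prop :=
  is_policy mu /\ forall s a, 0 < mu s a -> Q s a = maxQ Q s.

(* Finite ELP conditions (S_0 = s0 is the fixed terminal start state). *)
Definition is_ELP (P : S -> A -> S -> R) (rho : S -> R) (Sbot : {set S}) (s0 : S) : Prop :=
  (forall s a s', 0 <= P s a s') /\
  (forall s a, \sum_(s' : S) P s a s' = 1) /\
  ((forall s, 0 <= rho s) /\ \sum_(s : S) rho s = 1) /\
  s0 \in Sbot /\
  (forall s a s', s \in Sbot -> P s a s' = rho s') /\
  (forall pi, is_policy pi -> cvgn (ET_series P Sbot s0 pi)) /\
  (forall s, exists pi, is_policy pi /\ exists t, 0 < state_dist P s0 pi t s).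

Definition is_maximin P Rw Sbot s0 pi (Qm : S -> A -> R) : Prop :=
  (forall s a, Qm s a <= bellman P Rw Sbot Qm s a) /\
  (forall Q : S -> A -> R, (forall s a, Q s a <= bellman P Rw Sbot Q s a) ->
      Lobj P Sbot s0 pi Q <= Lobj P Sbot s0 pi Qm).

End ELP.

(** Write B^σ for the Bellman operator of a policy σ and B for the optimality
    operator. Because terminal states all transition by ρ, the iterates
    (B^σ)^(n+1) X are constant on terminal state-action pairs and equal the
    first n+1 terms of the series defining J(σ) plus a remainder weighted by
    Pr(T > n+1), so they tend to J(σ); and L_π is an average over terminal
    state-action pairs. Upper bound: Q_max <= B Q_max = B^μ Q_max for greedy μ,
    so Q_max <= (B^μ)^n Q_max, whence Q_max <= J(μ) on terminal pairs and
    L_π(Q_max) <= J(μ). Lower bound: the iterates B^n Q_max are feasible and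
    dominate (B^π')^n Q_max, so by maximality L_π(Q_max) is at least the terminal
    value of (B^π')^n Q_max, which tends to J(π'). *)

From HB Require Import structures.
From mathcomp Require Import all_boot all_order all_algebra.
From mathcomp Require Import all_classical all_reals all_analysis.
Set Implicit Arguments. Unset Strict Implicit. Unset Printing Implicit Defensive.
Import Order.TTheory GRing.Theory Num.Theory.
Import numFieldNormedType.Exports.
Local Open Scope classical_set_scope.
Local Open Scope ring_scope.

Section PolicyAverage.
Context {R : realType} {S A : finType}.
Implicit Types (sg : S -> A -> R) (Q X : S -> A -> R) (s : S) (a : A).

Lemma maxQ_ub Q s a : Q s a <= maxQ Q s.
Proof. by rewrite /maxQ; case: pickP => [a0 _|/(_ a)//]; exact: le_bigmax. Qed.

Lemma le_maxQ Q1 Q2 : (forall s a, Q1 s a <= Q2 s a) ->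
  forall s, maxQ Q1 s <= maxQ Q2 s.
Proof.
move=> le12 s; rewrite /maxQ; case: pickP => // a0 _.
by apply: bigmax_le => [|a _]; exact: le_trans (le12 s _) (le_bigmax _ _ _).
Qed.

Lemma policy_support sg s : is_policy sg -> exists a, sg s a != 0.
Proof.
case=> _ sg1; apply/existsP; apply: contraT; rewrite negb_exists => /forallP sg0.
by rewrite -(oner_eq0 R) -(sg1 s) big1 // => a _; apply/eqP; rewrite -[_ == _]negbK sg0.
Qed.

Definition polavg sg X s : R := \sum_(a : A) sg s a * X s a.

Lemma ler_polavg sg X Y s : is_policy sg -> (forall a, X s a <= Y s a) ->
  polavg sg X s <= polavg sg Y s.
Proof. by case=> sg0 _ leXY; apply: ler_sum => a _; exact: ler_wpM2l. Qed.

Lemma polavg_cst sg c s : is_policy sg -> polavg sg (fun _ _ => c) s = c.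
Proof. by case=> _ sg1; rewrite /polavg -mulr_suml sg1 mul1r. Qed.

Lemma polavg_le_maxQ sg X s : is_policy sg -> polavg sg X s <= maxQ X s.
Proof.
move=> sgP; rewrite -(polavg_cst (maxQ X s) s sgP).
by apply: ler_polavg => // a; exact: maxQ_ub.
Qed.

Lemma greedy_polavg Q mu s : is_greedy Q mu -> polavg mu Q s = maxQ Q s.
Proof.
move=> [muP greedy]; rewrite -(polavg_cst (maxQ Q s) s muP).
apply: eq_bigr => a _.
by have := muP.1 s a; rewrite le0r => /orP[/eqP->|/greedy->]; rewrite ?mul0r.
Qed.

End PolicyAverage.

Section Backup.
Context {R : realType} {S A : finType}.
Variables (P : S -> A -> S -> R) (Rw : S -> R) (Sbot : {set S}).
Hypothesis P_ge0 : forall s a s', 0 <= P s a s'.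

Definition backup (V : S -> R) (s : S) (a : A) : R :=
  \sum_(s' : S) P s a s' * (Rw s' + (s' \notin Sbot)%:R * V s').

Definition bellman_pol (sg Q : S -> A -> R) : S -> A -> R := backup (polavg sg Q).

Lemma ler_backup (V W : S -> R) : (forall s, V s <= W s) ->
  forall s a, backup V s a <= backup W s a.
Proof.
move=> leVW s a; apply: ler_sum => s' _; apply: ler_wpM2l => //.
by rewrite lerD2l ler_wpM2l ?ler0n.
Qed.

Lemma ler_bellman (Q1 Q2 : S -> A -> R) : (forall s a, Q1 s a <= Q2 s a) ->
  forall s a, bellman P Rw Sbot Q1 s a <= bellman P Rw Sbot Q2 s a.
Proof. by move=> le12; apply: ler_backup; exact: le_maxQ. Qed.

Lemma ler_bellman_pol sg (Q1 Q2 : S -> A -> R) : is_policy sg ->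
  (forall s a, Q1 s a <= Q2 s a) ->
  forall s a, bellman_pol sg Q1 s a <= bellman_pol sg Q2 s a.
Proof. by move=> sgP le12; apply: ler_backup => s; exact: ler_polavg. Qed.

Lemma bellman_pol_le_bellman sg (Q : S -> A -> R) s a : is_policy sg ->
  bellman_pol sg Q s a <= bellman P Rw Sbot Q s a.
Proof. by move=> sgP; apply: ler_backup => s'; exact: polavg_le_maxQ. Qed.

Lemma greedy_bellman_pol (Q mu : S -> A -> R) s a : is_greedy Q mu ->
  bellman_pol mu Q s a = bellman P Rw Sbot Q s a.
Proof. by move=> muG; apply: eq_bigr => s' _; rewrite greedy_polavg. Qed.

Lemma sum_split_terminal (f V : S -> R) :
  \sum_(s : S) f s * (Rw s + (s \notin Sbot)%:R * V s) =
  \sum_(s : S) f s * Rw s + \sum_(s | s \notin Sbot) f s * V s.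
Proof.
rewrite [X in _ + X]big_mkcond -big_split /=; apply: eq_bigr => s _.
by case: (s \notin Sbot); rewrite /= ?mul1r ?mul0r ?mulr0 ?addr0 ?mulrDr.
Qed.

End Backup.

Lemma series0 (K : numFieldType) (u : K ^nat) : series u 0 = 0.
Proof. by rewrite /series /= big_geq. Qed.

Section ELP.
Context {R : realType} {S A : finType}.
Variables (P : S -> A -> S -> R) (Rw rho : S -> R) (Sbot : {set S}) (s0 : S).
Hypothesis P_ge0 : forall s a s', 0 <= P s a s'.
Hypothesis P_sum1 : forall s a, \sum_(s' : S) P s a s' = 1.
Hypothesis P_terminal : forall s a s', s \in Sbot -> P s a s' = rho s'.
Hypothesis s0_terminal : s0 \in Sbot.
Hypothesis ET_cvg : forall sg, is_policy sg -> cvgn (ET_series P Sbot s0 sg).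
Implicit Types (sg X : S -> A -> R).

Local Notation alive := (alive P Sbot s0).
Local Notation backup := (backup P Rw Sbot).
Local Notation bellman_pol := (bellman_pol P Rw Sbot).
Local Notation J := (J P Rw Sbot s0).
Local Notation Lobj := (Lobj P Sbot s0).
Local Notation bellman := (bellman P Rw Sbot).

Lemma alive_ge0 sg n s : is_policy sg -> 0 <= alive sg n s.
Proof.
move=> [sg0 _]; elim: n s => [|n IH] s /=; first by apply: sumr_ge0 => a _; apply: mulr_ge0.
by apply: sumr_ge0 => s' _; apply: mulr_ge0 => //; apply: sumr_ge0 => a _; exact: mulr_ge0.
Qed.

Lemma sum_aliveS sg n (g : S -> R) :
  \sum_(s : S) alive sg n.+1 s * g s =
  \sum_(s | s \notin Sbot) alive sg n s *
    polavg sg (fun s a => \sum_(s' : S) P s a s' * g s') s.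
Proof.
rewrite /=; under eq_bigr do rewrite mulr_suml.
rewrite (exchange_big _ _ (index_enum S)) /=; apply: eq_bigr => s _.
under eq_bigr do rewrite mulr_sumr mulr_suml.
rewrite exchange_big /= /polavg mulr_sumr; apply: eq_bigr => a _.
by rewrite !mulr_sumr; apply: eq_bigr => s' _; rewrite !mulrA.
Qed.

Lemma sum_alive0 sg : is_policy sg -> \sum_(s : S) alive sg 0 s = 1.
Proof.
case=> _ sg1; rewrite /= exchange_big -(sg1 s0) /=; apply: eq_bigr => a _.
by rewrite -mulr_sumr P_sum1 mulr1.
Qed.

Lemma sum_alive_succ sg n : is_policy sg ->
  \sum_(s : S) alive sg n.+1 s = \sum_(s | s \notin Sbot) alive sg n s.
Proof.
move=> sgP; under eq_bigr do rewrite -[alive _ _ _]mulr1.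
rewrite sum_aliveS; apply: eq_bigr => s _.
rewrite /polavg; under eq_bigr do rewrite (eq_bigr _ (fun s' _ => mulr1 _)) P_sum1 mulr1.
by rewrite sgP.2 mulr1.
Qed.

Lemma sum_alive_terminal sg n : is_policy sg ->
  \sum_(s in Sbot) alive sg n s =
  \sum_(s : S) alive sg n s - \sum_(s : S) alive sg n.+1 s.
Proof. by move=> sgP; rewrite sum_alive_succ // [X in X - _](bigID (mem Sbot)) addrK. Qed.

(* Expected number of visits to s at times 1 <= t <= T. *)
Definition occupancy sg (s : S) : R := limn (series (fun n => alive sg n s)).

Lemma occupancy_cvg sg s : is_policy sg ->
  series (fun n => alive sg n s) @ \oo --> occupancy sg s.
Proof.
move=> sgP; apply: (@series_le_cvg _ _ (fun n => \sum_(s' : S) alive sg n s')).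
- by move=> n; exact: alive_ge0.
- by move=> n; apply: sumr_ge0 => s' _; exact: alive_ge0.
- by move=> n; rewrite (bigD1 s) //= lerDl sumr_ge0 // => s' _; exact: alive_ge0.
- exact: ET_cvg.
Qed.

Lemma occupancy_ge0 sg s : is_policy sg -> 0 <= occupancy sg s.
Proof.
move=> sgP; apply: limr_ge; first exact: cvgP (occupancy_cvg sgP).
by apply: nearW => n; apply: sumr_ge0 => k _; exact: alive_ge0.
Qed.

Lemma series_alive_cvg sg (w : S -> R) (D : pred S) : is_policy sg ->
  series (fun n => \sum_(s | D s) alive sg n s * w s) @ \oo -->
  \sum_(s | D s) occupancy sg s * w s.
Proof.
move=> sgP.
have -> : series (fun n => \sum_(s | D s) alive sg n s * w s) =
          (fun N => \sum_(s | D s) series (fun n => alive sg n s) N * w s).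
  apply: funext => N; rewrite /series /= exchange_big /=.
  by apply: eq_bigr => s _; rewrite mulr_suml.
apply: cvg_big => [|s _]; first exact: add_continuous.
by apply: cvgMl; exact: occupancy_cvg.
Qed.

Lemma sum_occupancy_terminal sg : is_policy sg -> \sum_(s in Sbot) occupancy sg s = 1.
Proof.
move=> sgP.
have telescope N : series (fun n => \sum_(s in Sbot) alive sg n s) N =
                   1 - \sum_(s : S) alive sg N s.
  elim: N => [|N IH]; first by rewrite /series /= big_geq // sum_alive0 // subrr.
  by rewrite seriesSr IH; cbv beta; rewrite sum_alive_terminal // addrA subrK.
have drop_one : (fun n => \sum_(s in Sbot) alive sg n s * 1) =
                (fun n => \sum_(s in Sbot) alive sg n s).
  by apply: funext => n; under eq_bigr do rewrite mulr1.
have cvg_one : (fun N => 1 - \sum_(s : S) alive sg N s) @ \oo --> (1 : R).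
  rewrite -[X in _ --> X]subr0.
  by apply: cvgB; [exact: cvg_cst|exact/cvg_series_cvg_0/ET_cvg].
have := series_alive_cvg (w := fun=> 1) (D := mem Sbot) sgP.
rewrite drop_one (funext telescope); under eq_bigr do rewrite mulr1.
by move=> cvg_occ; exact: cvg_unique cvg_occ cvg_one.
Qed.

Lemma J_occupancy sg : is_policy sg ->
  J sg = \sum_(s : S) occupancy sg s * Rw s.
Proof. by move=> sgP; apply: cvg_lim => //; exact: series_alive_cvg. Qed.

Lemma Lobj_occupancy sg Q : is_policy sg ->
  Lobj sg Q = \sum_(s in Sbot) occupancy sg s * polavg sg Q s.
Proof. by move=> sgP; apply: cvg_lim => //; exact: series_alive_cvg. Qed.

Lemma Lobj_cst sg c : is_policy sg -> Lobj sg (fun _ _ => c) = c.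
Proof.
move=> sgP; rewrite Lobj_occupancy //; under eq_bigr do rewrite polavg_cst //.
by rewrite -mulr_suml sum_occupancy_terminal // mul1r.
Qed.

Lemma ler_Lobj sg Q1 Q2 : is_policy sg ->
  (forall s a, s \in Sbot -> Q1 s a <= Q2 s a) ->
  Lobj sg Q1 <= Lobj sg Q2.
Proof.
move=> sgP le12; rewrite !Lobj_occupancy //; apply: ler_sum => s sbot.
by apply: ler_wpM2l; [exact: occupancy_ge0|apply: ler_polavg => // a; exact: le12].
Qed.

Lemma alive0 sg s : is_policy sg -> alive sg 0 s = rho s.
Proof.
case=> _ sg1 /=; under eq_bigr do rewrite P_terminal //.
by rewrite -mulr_suml sg1 mul1r.
Qed.

Lemma backup_terminal (V : S -> R) s a : s \in Sbot ->
  backup V s a = \sum_(s' : S) rho s' * (Rw s' + (s' \notin Sbot)%:R * V s').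
Proof. by move=> sbot; apply: eq_bigr => s' _; rewrite P_terminal. Qed.

Lemma bellman_pol_terminal sg X s s' a a' : s \in Sbot -> s' \in Sbot ->
  bellman_pol sg X s a = bellman_pol sg X s' a'.
Proof. by move=> sbot s'bot; rewrite /bellman_pol !backup_terminal. Qed.

Lemma iter_bellman_pol_terminal sg X n s a : is_policy sg -> s \in Sbot ->
  iter n.+1 (bellman_pol sg) X s a =
  series (fun k => \sum_(s' : S) alive sg k s' * Rw s') n.+1 +
  \sum_(s' | s' \notin Sbot) alive sg n s' * polavg sg X s'.
Proof.
move=> sgP sbot; elim: n X => [|n IH] X.
  rewrite [iter _ _ _]/= /bellman_pol backup_terminal // sum_split_terminal.
  rewrite seriesSr series0 add0r.
  by congr (_ + _); apply: eq_bigr => s' _; rewrite alive0.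
rewrite iterSr IH [in RHS]seriesSr -addrA; congr (_ + _).
by rewrite -sum_split_terminal sum_aliveS.
Qed.

Lemma iter_bellman_pol_cvg sg X s a : is_policy sg -> s \in Sbot ->
  iter n.+1 (bellman_pol sg) X s a @[n --> \oo] --> J sg.
Proof.
move=> sgP sbot; under eq_cvg do rewrite iter_bellman_pol_terminal //.
have sum0 : \sum_(s' | s' \notin Sbot) 0 * polavg sg X s' = 0.
  by rewrite big1 // => s' _; rewrite mul0r.
rewrite -[J sg]addr0 -[X in _ + X]sum0; apply: cvgD.
  rewrite (cvg_shiftS (series _)) J_occupancy //; exact: series_alive_cvg.
apply: cvg_big => [|s' _]; first exact: add_continuous.
by apply: cvgMl; apply: cvg_series_cvg_0; exact: cvgP (occupancy_cvg sgP).
Qed.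

Lemma le_J_of_le_bellman_pol mu Q s a : is_policy mu ->
  (forall s a, Q s a <= bellman_pol mu Q s a) -> s \in Sbot -> Q s a <= J mu.
Proof.
move=> muP Q_sub sbot.
have Q_le_iter n : forall s a, Q s a <= iter n (bellman_pol mu) Q s a.
  elim: n => [//|n IH] s' a'; rewrite iterS.
  by apply: le_trans (Q_sub s' a') _; exact: ler_bellman_pol.
have cvgJ := iter_bellman_pol_cvg Q a muP sbot.
rewrite -(cvg_lim _ cvgJ) //; apply: limr_ge; first exact: cvgP cvgJ.
by apply: nearW => n; exact: Q_le_iter.
Qed.

Lemma maximin_le_J_greedy pi Qmax mu : is_policy pi ->
  is_maximin P Rw Sbot s0 pi Qmax -> is_greedy Qmax mu -> Lobj pi Qmax <= J mu.
Proof.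
move=> piP [Qmax_feasible _] muG; rewrite -(Lobj_cst (J mu) piP).
apply: ler_Lobj => // s a sbot; apply: le_J_of_le_bellman_pol => // [|s' a'].
  exact: muG.1.
by rewrite greedy_bellman_pol.
Qed.

Lemma J_le_maximin pi Qmax pi' : is_policy pi ->
  is_maximin P Rw Sbot s0 pi Qmax -> is_policy pi' -> J pi' <= Lobj pi Qmax.
Proof.
move=> piP [Qmax_feasible Qmax_max] pi'P.
have [a0 _] := policy_support s0 pi'P.
pose Y n := iter n bellman Qmax.
have Y_feasible n : forall s a, Y n s a <= bellman (Y n) s a.
  by elim: n => [//|n IH] s a; exact: ler_bellman.
have iter_le_Y n : forall s a, iter n (bellman_pol pi') Qmax s a <= Y n s a.
  elim: n => [//|n IH] s a; rewrite !iterS.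
  apply: (le_trans (y := bellman_pol pi' (Y n) s a)); first exact: ler_bellman_pol.
  exact: bellman_pol_le_bellman.
have iter_le_Lobj n : iter n.+1 (bellman_pol pi') Qmax s0 a0 <= Lobj pi Qmax.
  apply: le_trans (Qmax_max _ (Y_feasible n.+1)); set c := iter _ _ _ s0 a0.
  rewrite -(Lobj_cst c piP); apply: ler_Lobj => // s a sbot.
  by rewrite /c iterS (bellman_pol_terminal _ _ a0 a s0_terminal sbot) -iterS.
have cvgJ := iter_bellman_pol_cvg Qmax a0 pi'P s0_terminal.
rewrite -(cvg_lim _ cvgJ) //; apply: limr_le; first exact: cvgP cvgJ.
exact: nearW.
Qed.

End ELP.

Theorem mainTheorem10 (R : realType) (S A : finType)
  (P : S -> A -> S -> R) (Rw : S -> R) (rho : S -> R) (Sbot : {set S}) (s0 : S)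
  (HELP : is_ELP P rho Sbot s0)
  (pi : S -> A -> R) (Hpi : is_policy pi)
  (Qmax : S -> A -> R) (Hmax : is_maximin P Rw Sbot s0 pi Qmax)
  (mu : S -> A -> R) (Hmu : is_greedy Qmax mu) :
  forall pi' : S -> A -> R, is_policy pi' ->
    J P Rw Sbot s0 pi' <= J P Rw Sbot s0 mu.
Proof.
move=> pi' Hpi'.
have [P_ge0 [P_sum1 [_ [s0_terminal [P_terminal [ET_cvg _]]]]]] := HELP.
exact: le_trans
  (J_le_maximin P_ge0 P_sum1 P_terminal s0_terminal ET_cvg Hpi Hmax Hpi')
  (maximin_le_J_greedy P_ge0 P_sum1 P_terminal s0_terminal ET_cvg Hpi Hmax Hmu).
Qed.
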